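(* Let $a_n$ denote the number of permutations of $[n]$ avoiding the vincular pattern 12–34. Then $$\liminf_{n\to\infty}\sqrt[n]{a_n/n!}\;\ge\;\frac{1}{\log 4}\approx 0.72134752.$$
   Context: A permutation $\sigma$ of $[n]$ contains the vincular pattern 12–34 if there exist indices $i<j$ with $\sigma(i)<\sigma(i+1)<\sigma(j)<\sigma(j+1)$. It avoids it otherwise. $\log$ denotes the natural logarithm. *)

From mathcomp Require Import all_boot all_fingroup.
Set Implicit Arguments. Unset Strict Implicit. Unset Printing Implicit Defensive.

(* Permutations of [n] are modelled as {perm 'I_n} (0-based positions/values). *)
Definition contains_12_34 (n : nat) (s : {perm 'I_n}) : bool :=
  [exists i : 'I_n, exists i1 : 'I_n, exists j : 'I_n, exists j1 : 'I_n,
    [&& (val i1 == (val i).+1), (val j1 == (val j).+1), (val i < val j)%N,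
        (val (s i) < val (s i1))%N, (val (s i1) < val (s j))%N &
        (val (s j) < val (s j1))%N]].

Definition avoids_12_34 (n : nat) (s : {perm 'I_n}) : bool := ~~ contains_12_34 s.

Definition a_seq (n : nat) : nat := #|[set s : {perm 'I_n} | avoids_12_34 s]|.

(** A permutation all of whose ascents [s i < s (i+1)] jump across a
    fixed threshold [t] (that is, [s i < t <= s (i+1)]) avoids 12-34.  Interleaving an
    ordered partition of [{0, ..., m-1}] into [a] blocks with one of [{m, ..., 2m-1}]
    into [a] blocks, every block written in decreasing order, produces such
    permutations injectively; hence [a_seq (2m)] and [a_seq (2m+1)] are at least the
    square of the number of ordered partitions of an [m]-set into [a] blocks, and for
    the best [a] this is at least [(Fub m / (m+1))^2], [Fub m] the Fubini number.
    For [y > ln 2] some partial sum [\sum_(1 <= k <= K) y^k / k!] exceeds [1], and the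
    recurrence [Fub p = \sum_k 'C(p, k) Fub (p - k)] then gives [p! y^K <= Fub p y^p].
    With [(2m)! <= 4^m (m!)^2] this yields [a_n / n! >= y^(2K) / ((n+1)^3 (2y)^n)], so
    the liminf of the [n]-th root is at least [1 / (2y)]; let [y] decrease to [ln 2]. *)

From mathcomp Require Import all_boot all_fingroup.
From Stdlib Require Import Reals Lra Psatz Factorial.
From Coquelicot Require Import Coquelicot.
From mathcomp Require Import all_order all_algebra Rstruct.
From mathcomp Require ring.
Import ssrnat seq path.
Delimit Scope R_scope with R.
Set Implicit Arguments. Unset Strict Implicit. Unset Printing Implicit Defensive.
Open Scope nat_scope.

Fixpoint ksubseqs (T : Type) (k : nat) (s : seq T) : seq (seq T) :=
  match k, s with
  | 0, _ => [:: [::]]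
  | _.+1, [::] => [::]
  | k'.+1, x :: s' => map (cons x) (ksubseqs k' s') ++ ksubseqs k s'
  end.

Section OrderedPartitions.
Variable T : eqType.
Implicit Types (s A : seq T).

Lemma mem_ksubseqs k s A : A \in ksubseqs k s -> subseq A s /\ size A = k.
Proof.
elim: s k A => [|x s IH] [|k] A //=; rewrite ?inE; try by move/eqP->.
rewrite mem_cat => /orP[/mapP[B /IH[sBs <-] ->]|/IH[sAs <-]].
  by rewrite /= eqxx sBs.
by split=> //; apply: subseq_trans sAs (subseq_cons s x).
Qed.

Lemma ksubseqs_uniq k s : uniq s -> uniq (ksubseqs k s).
Proof.
elim: s k => [|x s IH] [|k] //= /andP[xNs us].
rewrite cat_uniq map_inj_uniq ?IH //=; last by move=> ? ? [].
rewrite andbT; apply/hasPn => A /mem_ksubseqs[sAs _]; apply/mapP => -[B _ defA].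
by move: xNs; rewrite (mem_subseq sAs) // defA mem_head.
Qed.

Lemma size_ksubseqs k s : size (ksubseqs k s) = 'C(size s, k).
Proof.
elim: s k => [|x s IH] [|k] //=.
by rewrite size_cat size_map !IH binS addnC.
Qed.

Definition nonempty_subseqs s := [seq A | k <- iota 1 (size s), A <- ksubseqs k s].

Lemma mem_nonempty_subseqs s A :
  A \in nonempty_subseqs s -> subseq A s /\ 0 < size A.
Proof.
move=> /allpairsPdep[k [B [kP /mem_ksubseqs[sBs sBk] ->]]].
by move: kP; rewrite mem_iota -sBk => /andP[->].
Qed.

Lemma nonempty_subseqs_uniq s : uniq s -> uniq (nonempty_subseqs s).
Proof.
move=> us; apply: allpairs_uniq_dep => [|k _|]; rewrite ?iota_uniq ?ksubseqs_uniq //.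
move=> [k A] [l B] /allpairsPdep[k' [A' [_ /mem_ksubseqs[_ <-] [-> ->]]]].
by move=> /allpairsPdep[l' [B' [_ /mem_ksubseqs[_ <-] [-> ->]]]] /= ->.
Qed.

Fixpoint ordered_partitions (a : nat) s : seq (seq (seq T)) :=
  if a is a'.+1 then
    [seq A :: P | A <- nonempty_subseqs s,
                  P <- ordered_partitions a' [seq x <- s | x \notin A]]
  else if s is [::] then [:: [::]] else [::].

Lemma size_filter_notin_subseq s A : uniq s -> subseq A s ->
  size [seq x <- s | x \notin A] = size s - size A.
Proof.
move=> us sAs; have defA : A = [seq x <- s | x \in A] by apply/subseq_uniqP.
have /permPl/perm_size := perm_filterC (mem A) s.
by rewrite size_cat -defA => <-; rewrite addKn.
Qed.

Lemma mem_ordered_partitions a s P : uniq s -> P \in ordered_partitions a s ->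
  [/\ size P = a, all (fun A => 0 < size A) P, all (subseq^~ s) P &
      perm_eq (flatten P) s].
Proof.
elim: a s P => [|a IH] s P us /=; first by case: s us => // _; rewrite inE => /eqP->.
move=> /allpairsPdep[A [Q [/mem_nonempty_subseqs[sAs A_gt0] PQ ->]]].
have [<- Q_gt0 sQ pQ] := IH _ _ (filter_uniq _ us) PQ.
split=> //=; first by rewrite A_gt0.
  rewrite sAs; apply/allP => B /(allP sQ) sB.
  exact: subseq_trans sB (filter_subseq _ _).
have defA : A = [seq x <- s | x \in A] by apply/subseq_uniqP.
rewrite perm_sym -(perm_filterC (mem A) s) perm_sym -defA perm_cat2l.
exact: pQ.
Qed.

Lemma ordered_partitions_uniq a s : uniq s -> uniq (ordered_partitions a s).
Proof.
elim: a s => [|a IH] s us /=; first by case: s us.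
apply: allpairs_uniq_dep => [|A _|]; rewrite ?nonempty_subseqs_uniq ?IH ?filter_uniq //.
by move=> [A P] [B Q] _ _ /= [-> ->].
Qed.

End OrderedPartitions.

Fixpoint ordered_partition_count (a p : nat) : nat :=
  if a is a'.+1 then
    \sum_(1 <= k < p.+1) 'C(p, k) * ordered_partition_count a' (p - k)
  else p == 0.

Lemma size_ordered_partitions (T : eqType) a (s : seq T) : uniq s ->
  size (ordered_partitions a s) = ordered_partition_count a (size s).
Proof.
elim: a s => [|a IH] s us /=; first by case: s us.
rewrite size_allpairs_dep sumnE big_map /nonempty_subseqs big_allpairs_dep /=.
rewrite /index_iota subn1 /=; apply: eq_big_seq => k; rewrite mem_iota => /andP[k_gt0 _].
rewrite -size_ksubseqs -sum1_size big_distrl /=; apply: eq_big_seq => A /mem_ksubseqs[sAs sA].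
by rewrite IH ?filter_uniq // size_filter_notin_subseq // sA mul1n.
Qed.

Definition fubini p := \sum_(a < p.+1) ordered_partition_count a p.

Lemma fubini_le_max_count p :
  exists a, fubini p <= p.+1 * ordered_partition_count a p.
Proof.
have [a _ max_a] := @eq_bigmax_cond _ predT
  (fun a : 'I_p.+1 => ordered_partition_count a p) ltac:(by rewrite cardT size_enum_ord).
exists a; rewrite -[X in X * _]card_ord -sum_nat_const -max_a.
by apply: leq_sum => b _; apply: leq_bigmax.
Qed.

Lemma fubini_rec_le p :
  \sum_(1 <= k < p.+2) 'C(p.+1, k) * fubini (p.+1 - k) <= fubini p.+1.
Proof.
rewrite [X in _ <= X]/fubini big_ord_recl /= add0n exchange_big /=.
rewrite big_nat_cond [X in _ <= X]big_nat_cond; apply: leq_sum => k /andP[/andP[k_gt0 _] _].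
rewrite -big_distrr leq_mul2l /fubini; apply/orP; right.
rewrite (big_ord_widen p.+1 (ordered_partition_count^~ _)); last first.
  by rewrite ltn_subrL k_gt0.
by rewrite big_mkcond; apply: leq_sum => i _; rewrite add0n; case: ifP.
Qed.

Lemma fact_le_fubini p : p`! <= fubini p.
Proof.
elim: p => [|p IH]; first by rewrite /fubini big_ord_recl.
apply: leq_trans (fubini_rec_le p).
rewrite big_ltn // bin1 subSS subn0 factS.
by apply: leq_trans (leq_addr _ _); rewrite leq_mul2l IH orbT.
Qed.

Lemma bin_le_exp2 n k : 'C(n, k) <= 2 ^ n.
Proof.
elim: n k => [|n IH] [|k] //=; first by rewrite bin0 expn_gt0.
by rewrite binS expnS mul2n -addnn leq_add.
Qed.

Lemma fact_double_le m : (m + m)`! <= 4 ^ m * (m`! * m`!).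
Proof.
rewrite -(bin_fact (leq_addr m m)) addnK leq_mul2r.
by rewrite (_ : 4 = 2 ^ 2) // -expnM mul2n -addnn bin_le_exp2 orbT.
Qed.

Definition ascent_crosses (t : nat) : rel nat := fun x y => (x < y) ==> (x < t <= y).

Definition perm_word n (s : {perm 'I_n}) : seq nat := [seq val (s i) | i <- enum 'I_n].

Lemma nth_perm_word n (s : {perm 'I_n}) (i : 'I_n) : nth 0 (perm_word s) i = s i.
Proof. by rewrite (nth_map i) ?size_enum_ord // nth_ord_enum. Qed.

(* Two ascents at [i < j] would give [t <= s (i+1) < s j < t]. *)
Lemma perm_word_avoids t n (s : {perm 'I_n}) :
  sorted (ascent_crosses t) (perm_word s) -> avoids_12_34 s.
Proof.
move=> /(sortedP 0) cross; apply/existsP => -[i /existsP[i' /existsP[j /existsP[j']]]].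
move=> /and5P[/eqP i'E /eqP j'E _ asc_i /andP[lt_i'j asc_j]].
have size_w k (k' : 'I_n) : val k' = k.+1 -> k.+1 < size (perm_word s).
  by move=> <-; rewrite size_map size_enum_ord ltn_ord.
have := cross i (size_w _ _ i'E); rewrite -i'E !nth_perm_word.
move=> /implyP/(_ asc_i)/andP[_ t_le].
have := cross j (size_w _ _ j'E); rewrite -j'E !nth_perm_word.
move=> /implyP/(_ asc_j)/andP[lt_t _].
by have := leq_ltn_trans t_le (ltn_trans lt_i'j lt_t); rewrite ltnn.
Qed.

Lemma perm_word_surj n (w : seq nat) :
  perm_eq w (iota 0 n) -> exists s : {perm 'I_n}, perm_word s = w.
Proof.
move=> pw; have size_w : size w = n by rewrite (perm_size pw) size_iota.
have w_lt (i : 'I_n) : nth 0 w i < n.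
  have : nth 0 w i \in w by rewrite mem_nth ?size_w.
  by rewrite (perm_mem pw) mem_iota.
have f_inj : injective (fun i : 'I_n => Ordinal (w_lt i)).
  move=> i j [/eqP]; rewrite nth_uniq ?size_w ?(perm_uniq pw) ?iota_uniq //.
  by move=> /eqP/val_inj.
exists (perm f_inj); apply: (@eq_from_nth _ 0); first by rewrite size_map size_enum_ord.
move=> i; rewrite size_map size_enum_ord => lt_in.
by rewrite (nth_perm_word _ (Ordinal lt_in)) permE.
Qed.

Lemma size_le_a_seq t n (W : seq (seq nat)) : uniq W ->
  {in W, forall w, perm_eq w (iota 0 n) && sorted (ascent_crosses t) w} ->
  size W <= a_seq n.
Proof.
move=> uW Wok; rewrite /a_seq -(size_image (@perm_word n)).
apply: uniq_leq_size => // w /Wok/andP[/perm_word_surj[s <-] sorted_w].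
by apply: image_f; rewrite in_set (perm_word_avoids sorted_w).
Qed.

Lemma decreasing_path_crosses t x s : path gtn x s -> path (ascent_crosses t) x s.
Proof. by apply: sub_path => y z /= lt_zy; rewrite /ascent_crosses ltnNge ltnW. Qed.

Definition low_block t (A : seq nat) := [&& 0 < size A, sorted gtn A & all (gtn t) A].
Definition high_block t (B : seq nat) := [&& 0 < size B, sorted gtn B & all (leq t) B].
Definition split_blocks t (P Q : seq (seq nat)) :=
  [&& size P == size Q, all (low_block t) P & all (high_block t) Q].

Fixpoint interleave (P Q : seq (seq nat)) : seq nat :=
  if (P, Q) is (A :: P', B :: Q') then A ++ B ++ interleave P' Q' else [::].

Lemma interleave_path t P Q x : split_blocks t P Q -> t <= x ->
  path (ascent_crosses t) x (interleave P Q).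
Proof.
elim: P Q x => [|A P IH] [|B Q] x //.
move=> /and3P[/eqP[sPQ] /andP[lowA lowP] /andP[highB highQ]] t_le_x.
case: A lowA => [|a A] /and3P[] // _ dA aA.
case: B highB => [|b B] /and3P[] // _ dB bB.
have a_lt : a < t := allP aA a (mem_head a A).
have t_le_b : t <= b := allP bB b (mem_head b B).
have last_lt : last a A < t := allP aA _ (mem_last a A).
have t_le_last : t <= last b B := allP bB _ (mem_last b B).
rewrite /= {1}/ascent_crosses ltnNge (leq_trans (ltnW a_lt) t_le_x) /=.
rewrite cat_path decreasing_path_crosses //= {1}/ascent_crosses last_lt t_le_b implybT /=.
rewrite cat_path decreasing_path_crosses //=; apply: IH t_le_last.
by apply/and3P; split; rewrite ?sPQ.
Qed.

Lemma interleave_sorted t P Q : split_blocks t P Q -> sorted (ascent_crosses t) (interleave P Q).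
Proof. by move=> /interleave_path/(_ (leqnn t)); case: interleave => //= y w /andP[]. Qed.

Lemma perm_interleave P Q : size P = size Q ->
  perm_eq (interleave P Q) (flatten P ++ flatten Q).
Proof.
elim: P Q => [|A P IH] [|B Q] //= [/IH pPQ].
by rewrite -catA perm_cat2l perm_sym perm_catCA perm_cat2l perm_sym.
Qed.

Lemma cat_find_inj (T : Type) (a : pred T) (A A' X X' : seq T) :
  all (predC a) A -> all (predC a) A' -> find a X = 0 -> find a X' = 0 ->
  A ++ X = A' ++ X' -> A = A' /\ X = X'.
Proof.
have split_at B Y : all (predC a) B -> find a Y = 0 -> find a (B ++ Y) = size B.
  by rewrite all_predC find_cat => /negbTE-> ->; rewrite addn0.
move=> nA nA' fX fX' eq_cat.
have eq_size : size A = size A' by rewrite -(split_at A X) // eq_cat split_at.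
split; first by rewrite -(take_size_cat X eq_size) eq_cat take_size_cat.
by rewrite -(drop_size_cat X eq_size) eq_cat drop_size_cat.
Qed.

Lemma interleave_inj t P Q P' Q' : split_blocks t P Q -> split_blocks t P' Q' ->
  interleave P Q = interleave P' Q' -> P = P' /\ Q = Q'.
Proof.
have low_not_high A : low_block t A -> all (predC (leq t)) A.
  by move=> /and3P[_ _]; apply: sub_all => x /=; rewrite -ltnNge.
have high_not_low B : high_block t B -> all (predC (gtn t)) B.
  by move=> /and3P[_ _]; apply: sub_all => x /=; rewrite -leqNgt.
have find_high B R : high_block t B -> find (leq t) (B ++ R) = 0.
  by case: B => [|b B] /and3P[] //= _ _ /andP[->].
have find_low P1 Q1 : split_blocks t P1 Q1 -> find (gtn t) (interleave P1 Q1) = 0.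
  case: P1 Q1 => [|A P1] [|B Q1] // /and3P[_ /andP[lowA _] _].
  by case: A lowA => [|a A] /and3P[] //= _ _ /andP[->].
elim: P Q P' Q' => [|A P IH] [|B Q] [|A' P'] [|B' Q'] //.
- by move=> _ /and3P[_ /andP[/and3P[]]]; case: A'.
- by move=> /and3P[_ /andP[/and3P[]]]; case: A.
move=> okPQ okPQ'; have /and3P[/eqP[sPQ] /andP[lowA lowP] /andP[highB highQ]] := okPQ.
have /and3P[/eqP[sPQ'] /andP[lowA' lowP'] /andP[highB' highQ']] := okPQ'.
have okPQ1 : split_blocks t P Q by apply/and3P; rewrite sPQ.
have okPQ1' : split_blocks t P' Q' by apply/and3P; rewrite sPQ'.
move=> eq_interleave.
have [-> eqBI] := cat_find_inj (low_not_high _ lowA) (low_not_high _ lowA')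
  (find_high _ _ highB) (find_high _ _ highB') eq_interleave.
by have [-> /IH[] // -> ->] := cat_find_inj (high_not_low _ highB) (high_not_low _ highB')
  (find_low _ _ okPQ1) (find_low _ _ okPQ1') eqBI.
Qed.

Lemma ordered_partitions_rev_iota a lo m P :
  P \in ordered_partitions a (rev (iota lo m)) ->
  [/\ size P = a,
      all (fun A => [&& 0 < size A, sorted gtn A & all (fun x => lo <= x < lo + m) A]) P
    & perm_eq (flatten P) (iota lo m)].
Proof.
have uniq_s : uniq (rev (iota lo m)) by rewrite rev_uniq iota_uniq.
have sorted_s : sorted gtn (rev (iota lo m)) by rewrite rev_sorted iota_ltn_sorted.
move=> /(mem_ordered_partitions uniq_s)[sP nonempty sub pP].
split=> //; first apply/allP => A AP; last by rewrite (permPl pP) perm_rev.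
have sAs := allP sub A AP.
rewrite (allP nonempty A AP) (subseq_sorted (rev_trans ltn_trans) sAs sorted_s) /=.
by apply/allP => x /(mem_subseq sAs); rewrite mem_rev mem_iota.
Qed.

Lemma split_blocks_of_partitions a m P Q :
  P \in ordered_partitions a (rev (iota 0 m)) ->
  Q \in ordered_partitions a (rev (iota m m)) -> split_blocks m P Q.
Proof.
move=> /ordered_partitions_rev_iota[sP okP _] /ordered_partitions_rev_iota[sQ okQ _].
apply/and3P; split; first by rewrite sP sQ.
  apply: sub_all okP => A /and3P[A_gt0 dA rA].
  by rewrite /low_block A_gt0 dA; apply: sub_all rA => x /andP[].
apply: sub_all okQ => B /and3P[B_gt0 dB rB].
by rewrite /high_block B_gt0 dB; apply: sub_all rB => x /andP[].
Qed.

Definition crossing_words a m :=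
  [seq interleave P Q | P <- ordered_partitions a (rev (iota 0 m)),
                        Q <- ordered_partitions a (rev (iota m m))].

Lemma size_crossing_words a m :
  size (crossing_words a m) = ordered_partition_count a m ^ 2.
Proof.
by rewrite size_allpairs !size_ordered_partitions ?rev_uniq ?iota_uniq // !size_rev !size_iota.
Qed.

Lemma crossing_words_uniq a m : uniq (crossing_words a m).
Proof.
apply: allpairs_uniq; rewrite ?ordered_partitions_uniq ?rev_uniq ?iota_uniq //.
move=> [P Q] [P' Q'] /allpairsP[[P1 Q1] [/= P1P Q1Q [-> ->]]].
move=> /allpairsP[[P2 Q2] [/= P2P Q2Q [-> ->]]] /= eqPQ.
by have [-> ->] := interleave_inj (split_blocks_of_partitions P1P Q1Q)
  (split_blocks_of_partitions P2P Q2Q) eqPQ.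
Qed.

Lemma crossing_wordsP a m w : w \in crossing_words a m ->
  perm_eq w (iota 0 (m + m)) && sorted (ascent_crosses m) w.
Proof.
move=> /allpairsP[[P Q] [/= PP QQ ->]].
rewrite interleave_sorted ?andbT; last exact: split_blocks_of_partitions PP QQ.
have [sP _ pP] := ordered_partitions_rev_iota PP.
have [sQ _ pQ] := ordered_partitions_rev_iota QQ.
have sPQ : size P = size Q by rewrite sP sQ.
by rewrite (permPl (perm_interleave sPQ)) iotaD add0n perm_cat.
Qed.

(* Odd lengths: shifting all values up and appending a new minimum adds no ascent. *)
Definition lift_word (w : seq nat) := rcons (map succn w) 0.

Lemma lift_word_crosses t n w :
  perm_eq w (iota 0 n) && sorted (ascent_crosses t) w ->
  perm_eq (lift_word w) (iota 0 n.+1) && sorted (ascent_crosses t.+1) (lift_word w).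
Proof.
move=> /andP[pw sw]; apply/andP; split.
  by rewrite perm_rcons /= perm_cons (iotaDl 1 0) perm_map.
case: w sw {pw} => [|y w] //= sw; rewrite rcons_path path_map andbT.
by apply: sub_path sw => x z; rewrite /relpre /ascent_crosses /= !ltnS.
Qed.

Lemma count_sq_le_a_seq a n : ordered_partition_count a n./2 ^ 2 <= a_seq n.
Proof.
rewrite -size_crossing_words; set m := n./2.
have := odd_double_half n; rewrite -/m -addnn.
case: (odd n) => /= <-; last first.
  exact: size_le_a_seq (crossing_words_uniq a _) (fun w => @crossing_wordsP _ _ w).
rewrite -(size_map lift_word); apply: (size_le_a_seq (t := m.+1)).
  rewrite map_inj_uniq ?crossing_words_uniq // => w w' eq_lift.
  by apply: (inj_map succn_inj); apply: (rcons_injl 0).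
by move=> _ /mapP[w /crossing_wordsP w_ok ->]; apply: lift_word_crosses.
Qed.

Lemma fact_le_half_fact n : n`! <= n.+1 * (4 ^ n./2 * (n./2`! * n./2`!)).
Proof.
set m := n./2; have := odd_double_half n; rewrite -/m -addnn => defn.
apply: leq_trans (_ : n.+1 * (m + m)`! <= _); last by rewrite leq_mul2l fact_double_le orbT.
case: (odd n) defn => /= <-; rewrite ?add0n ?add1n ?leq_pmull // factS.
by rewrite leq_mul2r leqnSn orbT.
Qed.

Section FubiniLowerBound.
Import Order.TTheory GRing.Theory Num.Theory ring.
Local Open Scope ring_scope.
Variable R : realFieldType.

Lemma fact_div_fact n k : (k <= n)%N ->
  n`!%:R / k`!%:R = ('C(n, k) * (n - k)`!)%:R :> R.
Proof.
move=> le_kn; rewrite -{1}(bin_fact le_kn) mulnCA natrM mulrC mulKf //.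
by rewrite pnatr_eq0 -lt0n fact_gt0.
Qed.

Definition exp_partial_sum (y : R) K := \sum_(1 <= k < K.+1) y ^+ k / k`!%:R.

Variables (y : R) (K : nat).
Hypotheses (y_gt0 : 0 < y) (y_lt1 : y < 1) (partial_sum_ge1 : 1 <= exp_partial_sum y K).

Lemma fubini_lower_bound p : p`!%:R * y ^+ K <= (fubini p)%:R * y ^+ p.
Proof.
have y_ge0 : 0 <= y := ltW y_gt0.
elim/ltn_ind: p => p IH; case: (leqP p K) => [le_pK | lt_Kp].
  by apply: ler_pM; rewrite ?exprn_ge0 ?ler_nat ?fact_le_fubini // ler_wiXn2l // ltW.
case: p lt_Kp IH => [//|p] lt_Kp IH.
have partial_sum_le : exp_partial_sum y K <= exp_partial_sum y p.+1.
  rewrite /exp_partial_sum [X in _ <= X](@big_cat_nat _ _ _ K.+1) //= ?lerDl.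
    by apply: sumr_ge0 => k _; rewrite divr_ge0 ?exprn_ge0.
  exact: ltnW.
apply: le_trans (_ : p.+1`!%:R * y ^+ K * exp_partial_sum y p.+1 <= _).
  rewrite -[X in X <= _]mulr1 ler_wpM2l ?mulr_ge0 ?exprn_ge0 //.
  exact: le_trans partial_sum_ge1 partial_sum_le.
apply: le_trans (_ : \sum_(1 <= k < p.+2) ('C(p.+1, k) * fubini (p.+1 - k))%:R * y ^+ p.+1 <= _);
  last by rewrite -mulr_suml -natr_sum ler_wpM2r ?exprn_ge0 // ler_nat fubini_rec_le.
rewrite mulr_sumr !big_nat; apply: ler_sum => k /andP[k_gt0 le_kp].
have -> : p.+1`!%:R * y ^+ K * (y ^+ k / k`!%:R) =
          'C(p.+1, k)%:R * ((p.+1 - k)`!%:R * y ^+ K) * y ^+ k.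
  by rewrite (mulrA 'C(p.+1, k)%:R) -natrM -fact_div_fact //; ring.
have -> : ('C(p.+1, k) * fubini (p.+1 - k))%:R * y ^+ p.+1 =
          'C(p.+1, k)%:R * ((fubini (p.+1 - k))%:R * y ^+ (p.+1 - k)) * y ^+ k.
  by rewrite -[in y ^+ p.+1](subnK (le_kp : (k <= p.+1)%N)) exprD natrM; ring.
by rewrite ler_wpM2r ?exprn_ge0 // ler_wpM2l ?ler0n // IH // ltn_subrL k_gt0.
Qed.

Lemma a_seq_lower_bound n : 1 <= 2 * y ->
  n`!%:R * y ^+ (K + K) <= (a_seq n * n.+1 ^ 3)%:R * (2 * y) ^+ n.
Proof.
move=> y2_ge1; have y_ge0 : 0 <= y := ltW y_gt0.
set m := n./2; have [a le_fubini] := fubini_le_max_count m.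
set c := ordered_partition_count a m.
have le_half : m`!%:R * y ^+ K <= (m.+1 * c)%:R * y ^+ m.
  apply: le_trans (fubini_lower_bound m) _.
  by rewrite ler_wpM2r ?exprn_ge0 ?ler_nat.
have nonneg : 0 <= m`!%:R * y ^+ K by rewrite mulr_ge0 ?exprn_ge0.
have le_sq := ler_pM nonneg nonneg le_half le_half.
have le_mm : (m + m <= n)%N by rewrite addnn -[X in (_ <= X)%N](odd_double_half n) leq_addl.
have le_nat : (n.+1 * (m.+1 * c) ^ 2 <= a_seq n * n.+1 ^ 3)%N.
  rewrite [(a_seq n * _)%N]mulnC (expnS n.+1 2) -mulnA leq_mul2l /= expnMn.
  apply: leq_mul; last exact: count_sq_le_a_seq.
  by rewrite leq_exp2r // ltnS (leq_trans (leq_addr m m)).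
have le_exp : (2 * y) ^+ (m + m) <= (2 * y) ^+ n := ler_weXn2l y2_ge1 le_mm.
have four : 4 ^+ m = 2 ^+ (m + m) :> R by rewrite exprD -exprMn; congr (_ ^+ _); ring.
apply: le_trans (_ : (n.+1 * 4 ^ m * (m`! * m`!))%:R * y ^+ (K + K) <= _).
  by rewrite ler_wpM2r ?exprn_ge0 // ler_nat -mulnA fact_le_half_fact.
rewrite (_ : _ * y ^+ (K + K) = (n.+1 * 4 ^ m)%:R * (m`!%:R * y ^+ K * (m`!%:R * y ^+ K)));
  last by rewrite !natrM exprD; ring.
apply: le_trans (ler_wpM2l (ler0n _ _) le_sq) _.
rewrite [X in X <= _](_ : _ = (n.+1 * (m.+1 * c) ^ 2)%:R * (2 * y) ^+ (m + m));
  last by rewrite !natrM !natrX exprMn four !exprD; ring.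
by apply: ler_pM; rewrite ?ler0n ?exprn_ge0 ?ler_nat // (le_trans _ y2_ge1).
Qed.

End FubiniLowerBound.

Import GRing.Theory.
Open Scope R_scope.

Lemma fact_factorial n : fact n = n`!.
Proof. by elim: n => // n IH; rewrite factS -IH. Qed.

Lemma sum_f_R0_exp_partial_sum (y : R) N :
  sum_f_R0 (fun i => / INR (fact i) * y ^ i) N = 1 + exp_partial_sum y N.
Proof.
rewrite sum_f_R0E big_ltn // RplusE; congr (_ + _).
  by rewrite /= Rinv_1 Rmult_1_l.
rewrite /exp_partial_sum; apply: eq_bigr => k _.
by rewrite Rmult_comm RmultE RinvE INRE RpowE fact_factorial.
Qed.

Lemma exp_partial_sum_ge1 (y : R) : ln 2 < y -> exists K, 1 <= exp_partial_sum y K.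
Proof.
move=> ln2_lt_y; have exp_gt2 : 2 < exp y.
  by rewrite -[2]exp_ln; [exact: exp_increasing | lra].
have [N HN] := proj2_sig (exist_exp y) (exp y - 2) ltac:(lra).
exists N; have := HN N (Nat.le_refl N); rewrite /Rdist sum_f_R0_exp_partial_sum.
change (proj1_sig (exist_exp y)) with (exp y) => /Rabs_def2; lra.
Qed.

Lemma a_seq_lower_bound_R (y : R) K n : ln 2 < y -> y < 1 -> 1 <= exp_partial_sum y K ->
  INR (n`!) * y ^ (K + K) <= INR (a_seq n) * (INR n + 1) ^ 3 * (2 * y) ^ n.
Proof.
move=> ln2_lt_y y_lt1 partial_sum_ge1; have ln2_gt := ln_lt_2.
have y_gt0 : 0 < y by lra.
have two_y_ge1 : 1 <= 2 * y by lra.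
have := a_seq_lower_bound (introT RltP y_gt0) (introT RltP y_lt1)
  (introT RleP partial_sum_ge1) n (introT RleP two_y_ge1).
by rewrite natrM natrX -!INRE -!RpowE -!RmultE S_INR => /RleP.
Qed.

Definition root_ratio (n : nat) : R := Rpower (INR (a_seq n) / INR (n`!)) (1 / INR n).

Lemma exp_le x z : x <= z -> exp x <= exp z.
Proof. by case=> [/exp_increasing/Rlt_le | ->] //; apply: Rle_refl. Qed.

Definition lower_root (y : R) (K n : nat) : R :=
  exp (ln (y ^ (K + K)) * / INR n - 3 * (ln (INR n + 1) / INR n) - ln (2 * y)).

Lemma lower_root_le y K n : ln 2 < y -> y < 1 -> 1 <= exp_partial_sum y K ->
  (0 < n)%N -> lower_root y K n <= root_ratio n.
Proof.
move=> ln2_lt_y y_lt1 partial_sum_ge1 n_gt0; have ln2_gt := ln_lt_2.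
have bound := a_seq_lower_bound_R n ln2_lt_y y_lt1 partial_sum_ge1.
set t := INR n in bound *; set c := y ^ (K + K) in bound *.
have t_gt0 : 0 < t by apply: lt_0_INR; apply/ltP.
have c_gt0 : 0 < c by apply: pow_lt; lra.
have F_gt0 : 0 < INR n`! by apply: lt_0_INR; apply/ltP; apply: fact_gt0.
have P_gt0 : 0 < (t + 1) ^ 3 by apply: pow_lt; lra.
have Y_gt0 : 0 < (2 * y) ^ n by apply: pow_lt; lra.
have ratio : c / ((t + 1) ^ 3 * (2 * y) ^ n) <= INR (a_seq n) / INR n`!.
  apply/Rle_div_l; first exact: Rmult_lt_0_compat.
  rewrite (_ : _ * _ = INR (a_seq n) * (t + 1) ^ 3 * (2 * y) ^ n / INR n`!);
    last by field; lra.
  by apply/Rle_div_r => //; rewrite Rmult_comm.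
have PY_gt0 := Rmult_lt_0_compat _ _ P_gt0 Y_gt0.
have := ln_le _ _ (Rdiv_lt_0_compat _ _ c_gt0 PY_gt0) ratio.
rewrite (ln_div _ _ c_gt0 PY_gt0) (ln_mult _ _ P_gt0 Y_gt0).
rewrite (ln_pow (t + 1) 3 ltac:(lra)) (ln_pow (2 * y) n ltac:(lra)) -/t => ln_bound.
rewrite /lower_root /root_ratio /Rpower -/t -/c; apply: exp_le.
apply: Rle_trans (_ : (ln c - (INR 3 * ln (t + 1) + t * ln (2 * y))) * / t <= _).
  by right; rewrite /=; field; lra.
rewrite /Rdiv Rmult_1_l Rmult_comm; apply: Rmult_le_compat_l => //.
exact/Rlt_le/Rinv_0_lt_compat.
Qed.

Lemma is_lim_seq_ln_succ_div : is_lim_seq (fun n => ln (INR n + 1) / INR n) 0.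
Proof.
have succ_lim : is_lim_seq (fun n => INR n + 1) p_infty.
  apply: (is_lim_seq_ext (fun n => INR n.+1)); first by move=> n; rewrite S_INR.
  by apply/(is_lim_seq_incr_1 INR); exact: is_lim_seq_INR.
have ln_div_lim : is_lim_seq (fun n => ln (INR n + 1) / (INR n + 1)) 0.
  apply: (is_lim_comp_seq (fun x => ln x / x)) succ_lim; first exact: is_lim_div_ln_p.
  by exists 0%N.
have inv_lim : is_lim_seq (fun n => 1 + / INR n) 1.
  have := is_lim_seq_plus' _ _ _ _ (is_lim_seq_const 1) (is_lim_seq_inv _ _ is_lim_seq_INR _).
  by rewrite /= Rplus_0_r; apply.
apply: (is_lim_seq_ext_loc (fun n => ln (INR n + 1) / (INR n + 1) * (1 + / INR n))).
  exists 1%N => n n_ge1; have n_gt0 : 0 < INR n := lt_0_INR _ n_ge1.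
  by field; lra.
by have := is_lim_seq_mult' _ _ _ _ ln_div_lim inv_lim; rewrite Rmult_0_l.
Qed.

Lemma is_lim_seq_lower_root (y : R) K : 0 < y -> is_lim_seq (lower_root y K) (/ (2 * y)).
Proof.
move=> y_gt0; rewrite -[/ (2 * y)]exp_ln ?ln_Rinv; try lra; last by apply: Rinv_0_lt_compat; lra.
apply: is_lim_seq_continuous; first exact/derivable_continuous_pt/derivable_pt_exp.
have inv_lim := is_lim_seq_inv _ _ is_lim_seq_INR ltac:(discriminate).
have := is_lim_seq_minus' _ _ _ _ (is_lim_seq_minus' _ _ _ _
  (is_lim_seq_scal_l _ (ln (y ^ (K + K))) _ inv_lim)
  (is_lim_seq_scal_l _ 3 _ is_lim_seq_ln_succ_div)) (is_lim_seq_const (ln (2 * y))).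
by rewrite /= !Rmult_0_r Rminus_0_r Rminus_0_l.
Qed.

Lemma LimInf_seq_ge_lim (u w : nat -> R) (l : Rbar) :
  is_lim_seq w l -> eventually (fun n => w n <= u n) -> Rbar_le l (LimInf_seq u).
Proof.
move=> w_lim w_le_u.
by rewrite -(is_LimInf_seq_unique _ _ (is_lim_LimInf_seq _ _ w_lim)); apply: LimInf_le.
Qed.

Lemma LimInf_root_ratio_ge y : ln 2 < y -> y < 1 ->
  Rbar_le (/ (2 * y)) (LimInf_seq root_ratio).
Proof.
move=> ln2_lt_y y_lt1; have ln2_gt := ln_lt_2.
have [K partial_sum_ge1] := exp_partial_sum_ge1 ln2_lt_y.
apply: (LimInf_seq_ge_lim (@is_lim_seq_lower_root y K ltac:(lra))).
by exists 1%N => n /leP n_gt0; apply: lower_root_le.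
Qed.

Lemma Rbar_le_of_interval (b c : R) (L : Rbar) :
  b < c -> (forall z, b < z -> z < c -> Rbar_le z L) -> Rbar_le c L.
Proof.
move=> b_lt_c le_L; case: L le_L => [l | // | ] le_L; last first.
  by apply: (le_L ((b + c) / 2)); lra.
apply: Rnot_lt_le => l_lt_c.
have max_lt : Rmax b l < c by apply: Rmax_lub_lt.
have := le_L ((Rmax b l + c) / 2); have := Rmax_l b l; have := Rmax_r b l.
by rewrite /Rbar_le; lra.
Qed.

Theorem proposition12 :
  Rbar_le (Finite (1 / ln 4)%R)
    (LimInf_seq (fun n : nat =>
       Rpower (INR (a_seq n) / INR (n`!))%R (1 / INR n)%R)).
Proof.
have ln2_gt := ln_lt_2; have ln2_lt1 : ln 2 < 1.
  by rewrite -[1]ln_exp; apply: ln_increasing; have := exp_ineq1 1; lra.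
have -> : 1 / ln 4 = / (2 * ln 2).
  by rewrite (_ : 4 = 2 * 2) ?ln_mult; try lra; field; lra.
(* Substitute [z = / (2 * y)] with [ln 2 < y < 1]. *)
apply: (@Rbar_le_of_interval (/ 2)) => [|z z_gt z_lt].
  by apply: Rinv_lt_contravar; nra.
have z_pos : 0 < z by lra.
have z_ln2_lt1 : z * (2 * ln 2) < 1.
  by have := Rmult_lt_compat_r (2 * ln 2) _ _ ltac:(lra) z_lt; rewrite Rinv_l; lra.
have := @LimInf_root_ratio_ge (/ (2 * z)).
rewrite (_ : / (2 * / (2 * z)) = z); last by field; lra.
apply.
  by apply: (Rmult_lt_reg_l (2 * z)); rewrite ?Rinv_r; nra.
by apply: (Rmult_lt_reg_l (2 * z)); rewrite ?Rinv_r; nra.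
Qed.
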